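(* Let $H$ be a real separable Hilbert space, $k,q\in\mathbb{N}$ and $n=k+q$. Then, inside $H^{\otimes n}$, \[ H_{k,q}=H_{k,q}^+\oplus H_{k,q}^-, \] where $H_{k,q}=H^{\odot k}\otimes H^{\wedge q}$, $H_{k,q}^+=H_{k,q}\cap H^{\odot[k+1],\wedge[q-1]}$ and $H_{k,q}^-=H_{k,q}\cap H^{\odot[k-1],\wedge[q+1]}$.
   Context: $H^{\otimes n}$ is the Hilbert-space completed $n$-th tensor power of $H$; $H^{\odot k}\otimes H^{\wedge q}$ is the closed subspace of elements of $H^{\otimes n}$ that are symmetric in the first $k$ tensor factors and skew-symmetric in the last $q$ factors. For integers $m,p\ge0$ with $m+p=n$, $H^{\odot[m],\wedge[p]}$ denotes the closed linear span of all elements of $H^{\otimes n}$ that are symmetric in some set of $m$ tensor positions and skew-symmetric in the remaining $p$ positions (the set of positions is not fixed; it ranges over all $m$-element subsets of $\{1,\dots,n\}$). If $m$ or $p$ is negative, $H^{\odot[m],\wedge[p]}$ is taken to be $\{0\}$. *)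

From HB Require Import structures.
From mathcomp Require Import all_boot all_order all_algebra all_fingroup.
From mathcomp Require Import all_classical all_reals.
From mathcomp Require Import ereal esum.
Set Implicit Arguments. Unset Strict Implicit. Unset Printing Implicit Defensive.
Import Order.TTheory GRing.Theory Num.Theory.
Local Open Scope classical_set_scope.
Local Open Scope ring_scope.

(* Model: a real separable Hilbert space H is (isometric to) l^2(I) for a
   countable index type I (an orthonormal basis).  Then the Hilbert-space
   completed tensor power H^{(x)n} is l^2(I^n), I^n = {ffun 'I_n -> I}, and the
   permutation of tensor factors by s acts by permuting coordinates. *)

Section TensorPower.
Variables (R : realType) (I : countType).

Definition multi (n : nat) := {ffun 'I_n -> I}.
Definition vec (n : nat) := multi n -> R.

Definition sqnorm n (f : vec n) : \bar R :=
  (\esum_(x in [set: multi n]) ((f x) ^+ 2)%:E)%E.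

Definition in_l2 n (f : vec n) : Prop := (sqnorm f < +oo)%E.

(* inner product <f, g> = sum over I^n of f x * g x (absolutely convergent
   for f, g in l^2), written as positive part minus negative part *)
Definition inner n (f g : vec n) : R :=
  fine (\esum_(x in [set: multi n]) (Num.max (f x * g x) 0)%R%:E)%E -
  fine (\esum_(x in [set: multi n]) (Num.max (- (f x * g x)) 0)%R%:E)%E.

Definition pact n (s : 'S_n) (f : vec n) : vec n :=
  fun x => f [ffun i => x (s i)].

Definition symm_on n (A : {set 'I_n}) (f : vec n) : Prop :=
  forall s : 'S_n, perm_on A s -> pact s f = f.

Definition skew_on n (A : {set 'I_n}) (f : vec n) : Prop :=
  forall s : 'S_n, perm_on A s -> pact s f = (fun x => (-1) ^+ odd_perm s * f x).

Definition Hkq (k q : nat) : set (vec (k + q)) :=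
  [set f | in_l2 f /\
     symm_on [set i : 'I_(k + q) | (i < k)%N] f /\
     skew_on [set i : 'I_(k + q) | (k <= i)%N] f].

Definition lspan n (S : set (vec n)) : set (vec n) :=
  [set f | exists m (c : 'I_m -> R) (g : 'I_m -> vec n),
     (forall i, S (g i)) /\ f = (fun x => \sum_(i < m) c i * g i x)].

Definition l2closure n (S : set (vec n)) : set (vec n) :=
  [set f | in_l2 f /\ forall e : R, 0 < e ->
     exists g, S g /\ (sqnorm (fun x => (f x - g x)%R) < e%:E)%E].

Definition mixed_gens n (m : nat) : set (vec n) :=
  [set f | in_l2 f /\ exists A : {set 'I_n},
     #|A| = m /\ symm_on A f /\ skew_on (~: A) f].

(* H^{(.)[m], /\[p]} inside H^{(x)n}; {0} if m or p is negative
   (or if m + p <> n, which never happens in the uses below) *)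
Definition mixed n (m p : int) : set (vec n) :=
  if (0 <= m) && (0 <= p) && (m + p == n%:Z)
  then l2closure (lspan (@mixed_gens n `|m|%N))
  else [set (fun _ => 0)].

End TensorPower.

(* Let A be the first k tensor positions and f be symmetric on A and skew on its complement.
   For j outside A put S_j f = f + sum_{c in A} (c j) f, and for i in A put
   T_i f = f - sum_{c outside A} (i c) f.  Up to a nonzero factor S_j f is the symmetrisation
   of f over A + {j} and T_i f its antisymmetrisation over (complement of A) + {i}, so
   sum_j S_j f lies in H^{(.)[k+1], /\[q-1]} and sum_i T_i f in H^{(.)[k-1], /\[q+1]}; the two
   sums add up to n f because their transposition terms cancel.  An antisymmetrisation over
   q+1 positions kills every element symmetric in k+1 positions (two positions are shared), and
   since it is a finite combination of point evaluations it also kills the l^2-closure of their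
   span: T_i g = 0 for g in H^+, and likewise S_j h = 0 for h in H^-.  Hence sum_j S_j g = n g,
   and as each S_j is self-adjoint, n <g, h> = sum_j <g, S_j h> = 0. *)

From HB Require Import structures.
From mathcomp Require Import all_boot all_order all_algebra all_fingroup.
From mathcomp Require Import all_classical all_reals.
From mathcomp Require Import ereal esum.
From mathcomp Require Import lra zify.
Import Order.TTheory GRing.Theory Num.Theory.

Set Implicit Arguments. Unset Strict Implicit. Unset Printing Implicit Defensive.
Local Open Scope ring_scope.

Lemma sum_fun_ind (V : nmodType) (T J : Type) (P : (T -> V) -> Prop)
    (rs : seq J) (Q : pred J) (F : J -> T -> V) :
  P (fun _ => 0) -> (forall f g, P f -> P g -> P (fun x => f x + g x)) ->
  (forall j, Q j -> P (F j)) -> P (fun x => \sum_(j <- rs | Q j) F j x).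
Proof.
move=> P0 PD PF; elim: rs => [|j rs IH].
  by rewrite (_ : (fun _ => _) = fun _ => 0) //; apply: funext => x; rewrite big_nil.
case Qj: (Q j).
  have -> : (fun x => \sum_(i <- j :: rs | Q i) F i x) =
            (fun x => F j x + \sum_(i <- rs | Q i) F i x).
    by apply: funext => x; rewrite big_cons Qj.
  exact: PD (PF j Qj) IH.
have -> : (fun x => \sum_(i <- j :: rs | Q i) F i x) = (fun x => \sum_(i <- rs | Q i) F i x).
  by apply: funext => x; rewrite big_cons Qj.
exact: IH.
Qed.

(** * Symmetrisation over sets of tensor positions *)

Section PermAction.
Variables (R : realType) (I : countType) (n : nat).
Implicit Types (f g : vec R I n) (s t : 'S_n) (A B D : {set 'I_n}) (x : multi I n).

Definition mperm s x : multi I n := [ffun i => x (s i)].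

Lemma mpermM s t x : mperm s (mperm t x) = mperm (s * t)%g x.
Proof. by apply/ffunP => i; rewrite !ffunE permM. Qed.

Lemma mperm1 x : mperm 1 x = x.
Proof. by apply/ffunP => i; rewrite !ffunE perm1. Qed.

Lemma mpermK s : cancel (mperm s) (mperm s^-1).
Proof. by move=> x; rewrite mpermM mulVg mperm1. Qed.

Lemma mpermKV s : cancel (mperm s^-1) (mperm s).
Proof. by move=> x; rewrite mpermM mulgV mperm1. Qed.

Lemma pactE s f x : pact s f x = f (mperm s x).
Proof. by []. Qed.

Lemma pactM s t f : pact s (pact t f) = pact (t * s)%g f.
Proof. by apply: funext => x; rewrite !pactE mpermM. Qed.

Lemma pact1 f : pact 1 f = f.
Proof. by apply: funext => x; rewrite pactE mperm1. Qed.

Lemma pact_tpermJ s (a b : 'I_n) f :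
  pact s (pact (tperm a b) f) = pact (tperm (s a) (s b)) (pact s f).
Proof. by rewrite !pactM -tpermJ /conjg mulKVg. Qed.

Lemma pactC B D s t f : [disjoint B & D] -> perm_on B s -> perm_on D t ->
  pact s (pact t f) = pact t (pact s f).
Proof. by move=> BD Bs Dt; rewrite !pactM (perm_onC Bs Dt BD). Qed.

Definition signp s : R := (-1) ^+ odd_perm s.

Lemma signpM s t : signp (s * t)%g = signp s * signp t.
Proof. by rewrite /signp odd_permM signr_addb. Qed.

Lemma signp_sq s : signp s * signp s = 1.
Proof. by rewrite /signp -signr_addb addbb. Qed.

Lemma signp_tperm (a b : 'I_n) : a != b -> signp (tperm a b) = -1.
Proof. by move=> ab; rewrite /signp odd_tperm ab expr1. Qed.

Lemma symm_onE A f s x : symm_on A f -> perm_on A s -> f (mperm s x) = f x.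
Proof. by move=> fA As; rewrite -pactE fA. Qed.

Lemma skew_onE A f s x : skew_on A f -> perm_on A s -> f (mperm s x) = signp s * f x.
Proof. by move=> fA As; rewrite -pactE fA. Qed.

Lemma symm_onS A B f : A \subset B -> symm_on B f -> symm_on A f.
Proof. by move=> AB fB s As; apply/fB/(fintype.subset_trans As). Qed.

Lemma skew_onS A B f : A \subset B -> skew_on B f -> skew_on A f.
Proof. by move=> AB fB s As; apply/fB/(fintype.subset_trans As). Qed.

Lemma symm_onZ A (a : R) f : symm_on A f -> symm_on A (fun x => a * f x).
Proof. by move=> fA s As; apply: funext => x; rewrite pactE (symm_onE _ fA As). Qed.

Lemma skew_onZ A (a : R) f : skew_on A f -> skew_on A (fun x => a * f x).
Proof. by move=> fA s As; apply: funext => x; rewrite pactE (skew_onE _ fA As) mulrCA. Qed.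

Lemma symm_onD A f g : symm_on A f -> symm_on A g -> symm_on A (fun x => f x + g x).
Proof.
by move=> fA gA s As; apply: funext => x; rewrite pactE (symm_onE _ fA As) (symm_onE _ gA As).
Qed.

Lemma skew_onD A f g : skew_on A f -> skew_on A g -> skew_on A (fun x => f x + g x).
Proof.
move=> fA gA s As; apply: funext => x.
by rewrite pactE (skew_onE _ fA As) (skew_onE _ gA As) mulrDr.
Qed.

Lemma perm_on_tperm A (a b : 'I_n) : a \in A -> b \in A -> perm_on A (tperm a b).
Proof.
move=> aA bA; apply: fintype.subset_trans (tperm_on a b) _.
by apply/fintype.subsetP => z; rewrite !inE => /orP[]/eqP->.
Qed.

Lemma perm_onMl A s t : perm_on A t -> perm_on A (t * s)%g = perm_on A s.
Proof.
move=> At; apply/idP/idP => [Ats|]; last exact: perm_onM.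
by rewrite -(mulKg t s); apply: perm_onM => //; apply: perm_onV.
Qed.

Lemma perm_onMr A s t : perm_on A t -> perm_on A (s * t)%g = perm_on A s.
Proof.
move=> At; apply/idP/idP => [Ast|As]; last exact: perm_onM.
by rewrite -(mulgK t s); apply: perm_onM => //; apply: perm_onV.
Qed.

Lemma sum_perm_onMl A t (F : 'S_n -> R) : perm_on A t ->
  \sum_(s | perm_on A s) F s = \sum_(s | perm_on A s) F (t * s)%g.
Proof.
by move=> At; rewrite (reindex_inj (mulgI t)); apply: eq_bigl => s; rewrite /= perm_onMl.
Qed.

Lemma sum_perm_onMr A t (F : 'S_n -> R) : perm_on A t ->
  \sum_(s | perm_on A s) F s = \sum_(s | perm_on A s) F (s * t)%g.
Proof.
by move=> At; rewrite (reindex_inj (mulIg t)); apply: eq_bigl => s; rewrite /= perm_onMr.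
Qed.

Lemma card_setI_gt1 B D : (n.+1 < #|B| + #|D|)%N -> (1 < #|B :&: D|)%N.
Proof. by move=> h; have := cardsUI B D; have := max_card (B :|: D); rewrite card_ord; lia. Qed.

Lemma card_perm_on_neq0 A : (#|perm_on A|%:R : R) != 0.
Proof. by rewrite card_perm pnatr_eq0 -lt0n fact_gt0. Qed.

Lemma sum_set_perm A s (F : 'I_n -> R) : perm_on A s ->
  \sum_(c in A) F (s c) = \sum_(c in A) F c.
Proof.
move=> As; rewrite [RHS](reindex_inj (@perm_inj _ s)).
by apply: eq_bigl => c; rewrite /= (perm_closed _ As).
Qed.

Definition sym_over B f : vec R I n := fun x => \sum_(s | perm_on B s) pact s f x.

Definition alt_over B f : vec R I n :=
  fun x => \sum_(s | perm_on B s) signp s * pact s f x.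

Lemma sym_over_symm B f : symm_on B (sym_over B f).
Proof.
move=> t Bt; apply: funext => x; rewrite pactE /sym_over [RHS](sum_perm_onMr _ Bt).
by apply: eq_bigr => s _; rewrite !pactE mpermM.
Qed.

Lemma alt_over_skew B f : skew_on B (alt_over B f).
Proof.
move=> t Bt; apply: funext => x; rewrite pactE /alt_over [in RHS](sum_perm_onMr _ Bt).
rewrite -/(signp t) mulr_sumr; apply: eq_bigr => s _.
by rewrite !pactE mpermM signpM !mulrA (mulrC (signp t)) -(mulrA (signp s)) signp_sq mulr1.
Qed.

Lemma sym_over_skew B D f : [disjoint B & D] -> skew_on D f -> skew_on D (sym_over B f).
Proof.
move=> BD fD t Dt; apply: funext => x; rewrite pactE /sym_over /= mulr_sumr.
by apply: eq_bigr => s Bs; rewrite -[LHS]pactE -(pactC _ BD Bs Dt) (fD _ Dt).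
Qed.

Lemma alt_over_symm B D f : [disjoint B & D] -> symm_on D f -> symm_on D (alt_over B f).
Proof.
move=> BD fD t Dt; apply: funext => x; rewrite pactE /alt_over /=.
by apply: eq_bigr => s Bs; rewrite -[pact s f _]pactE -(pactC _ BD Bs Dt) (fD _ Dt).
Qed.

(* Transposing two positions shared by B and D fixes f but flips the sign of every term. *)
Lemma alt_over_eq0 B D f x : (1 < #|B :&: D|)%N -> symm_on D f -> alt_over B f x = 0.
Proof.
case/card_gt1P => a [b [+ + ab]]; rewrite !inE => /andP[aB aD] /andP[bB bD] fD.
have tB := perm_on_tperm aB bB; have tD := perm_on_tperm aD bD.
suff : alt_over B f x = - alt_over B f x by set y := alt_over B f x; lra.
rewrite {1}/alt_over (sum_perm_onMl _ tB) -sumrN; apply: eq_bigr => s _.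
by rewrite signpM signp_tperm // -pactM (fD _ tD) mulN1r mulNr.
Qed.

Lemma sym_over_eq0 B D f x : (1 < #|B :&: D|)%N -> skew_on D f -> sym_over B f x = 0.
Proof.
case/card_gt1P => a [b [+ + ab]]; rewrite !inE => /andP[aB aD] /andP[bB bD] fD.
have tB := perm_on_tperm aB bB; have tD := perm_on_tperm aD bD.
suff : sym_over B f x = - sym_over B f x by set y := sym_over B f x; lra.
rewrite {1}/sym_over (sum_perm_onMl _ tB) -sumrN; apply: eq_bigr => s _.
by rewrite -pactM (fD _ tD) -/(signp _) signp_tperm // pactE mulN1r.
Qed.

Lemma sum_perm_on_setU1 A j (F : 'S_n -> R) : j \notin A ->
  \sum_(s | perm_on (j |: A) s) F s =
  \sum_(c in j |: A) \sum_(r | perm_on A r) F (r * tperm c j)%g.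
Proof.
move=> jA; rewrite (partition_big (fun s : 'S_n => s j) (mem (j |: A))); last first.
  by move=> s js; rewrite inE /= (perm_closed _ js) setU11.
apply: eq_bigr => c cjA.
rewrite (reindex_onto (fun r : 'S_n => r * tperm c j)%g (fun s : 'S_n => s * tperm c j)%g);
  last by move=> s _; rewrite -mulgA tperm2 mulg1.
apply: eq_bigl => r; rewrite -mulgA tperm2 mulg1 eqxx andbT permM.
have jAt : perm_on (j |: A) (tperm c j) by apply: perm_on_tperm; rewrite // setU11.
rewrite perm_onMr //; apply/idP/idP => [/andP[jAr /eqP rj]|Ar].
  have rjj : r j = j by apply: (@perm_inj _ (tperm c j)); rewrite rj tpermR.
  apply/fintype.subsetP => z; rewrite inE => rz.
  move: (fintype.subsetP jAr z); rewrite !inE => /(_ rz).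
  by case/orP => // /eqP zj; move: rz; rewrite zj rjj eqxx.
by rewrite (out_perm Ar jA) tpermR eqxx andbT; exact: fintype.subset_trans Ar (subsetU1 j A).
Qed.

Definition sym_ext A j f : vec R I n := fun x => f x + \sum_(c in A) pact (tperm c j) f x.

Definition alt_ext D i f : vec R I n := fun x => f x - \sum_(c in D) pact (tperm i c) f x.

Lemma sym_over_setU1 A j f x : j \notin A -> symm_on A f ->
  sym_over (j |: A) f x = #|perm_on A|%:R * sym_ext A j f x.
Proof.
move=> jA fA; rewrite /sym_over (sum_perm_on_setU1 _ jA).
under eq_bigr => c _.
  rewrite (eq_bigr (fun _ => pact (tperm c j) f x)); last by move=> r Ar; rewrite -pactM fA.
  rewrite sumr_const -mulr_natl; over.
rewrite -mulr_sumr /sym_ext (bigD1 j) ?setU11 //= tperm1 pact1; congr (_ * (_ + _)).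
by apply: eq_bigl => c; rewrite !inE; case: eqVneq => [->|]; rewrite ?(negbTE jA) ?andbT ?andbF.
Qed.

Lemma alt_over_setU1 D i f x : i \notin D -> skew_on D f ->
  alt_over (i |: D) f x = #|perm_on D|%:R * alt_ext D i f x.
Proof.
move=> iD fD; rewrite /alt_over (sum_perm_on_setU1 _ iD).
under eq_bigr => c _.
  rewrite (eq_bigr (fun _ => signp (tperm c i) * pact (tperm c i) f x)); last first.
    by move=> r Dr; rewrite -pactM (fD r Dr) signpM /= -/(signp r) mulrACA signp_sq mul1r.
  rewrite sumr_const -mulr_natl; over.
rewrite -mulr_sumr /alt_ext (bigD1 i) ?setU11 //= tperm1 pact1 /signp odd_perm1 mul1r.
congr (_ * (_ + _)); rewrite -sumrN; apply: eq_big => c.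
  by rewrite !inE; case: eqVneq => [->|]; rewrite ?(negbTE iD) ?andbT ?andbF.
by rewrite !inE => /andP[_ ci]; rewrite -/(signp _) signp_tperm // tpermC mulN1r.
Qed.

Definition sym_part A f : vec R I n := fun x => \sum_(j in ~: A) sym_ext A j f x.

Definition alt_part A f : vec R I n := fun x => \sum_(i in A) alt_ext (~: A) i f x.

(* The transposition terms cancel: both double sums run over the pairs (c, j)
   with c in A and j outside A. *)
Lemma sym_part_add_alt_part A f x : sym_part A f x + alt_part A f x = n%:R * f x.
Proof.
rewrite /sym_part /alt_part /sym_ext /alt_ext big_split /= sumrB exchange_big /=.
rewrite addrACA subrr addr0 !sumr_const -mulrnDr addnC cardsC card_ord.
by rewrite mulr_natl.
Qed.

Lemma sym_part_symm A f : symm_on A f -> symm_on A (sym_part A f).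
Proof.
move=> fA r Ar; apply: funext => x; rewrite pactE /sym_part.
apply: eq_bigr => j; rewrite inE => jA; rewrite /sym_ext -!pactE (fA r Ar); congr (_ + _).
rewrite -[in RHS](sum_set_perm _ Ar); apply: eq_bigr => c _.
by rewrite -pactE pact_tpermJ (fA r Ar) (out_perm Ar jA).
Qed.

Lemma sym_part_skew A f : skew_on (~: A) f -> skew_on (~: A) (sym_part A f).
Proof.
move=> fA r Ar; apply: funext => x; rewrite pactE /sym_part /= -/(signp r) mulr_sumr.
rewrite -[in RHS](sum_set_perm _ Ar); apply: eq_bigr => j jA.
rewrite /sym_ext -!pactE (fA r Ar) mulrDr mulr_sumr; congr (_ + _).
apply: eq_bigr => c cA.
by rewrite -pactE pact_tpermJ (fA r Ar) (out_perm Ar) // inE negbK.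
Qed.

Lemma alt_part_symm A f : symm_on A f -> symm_on A (alt_part A f).
Proof.
move=> fA r Ar; apply: funext => x; rewrite pactE /alt_part.
rewrite -[in RHS](sum_set_perm _ Ar); apply: eq_bigr => i iA.
rewrite /alt_ext -!pactE (fA r Ar); congr (_ - _); apply: eq_bigr => c; rewrite inE => cA.
by rewrite -pactE pact_tpermJ (fA r Ar) (out_perm Ar cA).
Qed.

Lemma alt_part_skew A f : skew_on (~: A) f -> skew_on (~: A) (alt_part A f).
Proof.
move=> fA r Ar; apply: funext => x; rewrite pactE /alt_part /= -/(signp r) mulr_sumr.
apply: eq_bigr => i iA; rewrite /alt_ext -!pactE (fA r Ar) mulrBr mulr_sumr; congr (_ - _).
rewrite -[in RHS](sum_set_perm _ Ar); apply: eq_bigr => c _.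
by rewrite -pactE pact_tpermJ (fA r Ar) (out_perm Ar) // inE negbK.
Qed.

End PermAction.

(** * Absolutely summable families and l^2 *)

Section SquareSummable.
Variables (R : realType) (I : countType) (n : nat).
Implicit Types (u v : vec R I n) (p r : multi I n -> R).

Local Notation esumT a := (\esum_(x in [set: multi I n]) a x)%E.

Lemma esum_fin_le p r : (forall x, 0 <= p x <= r x) ->
  (esumT (fun x => (r x)%:E) < +oo)%E -> (esumT (fun x => (p x)%:E) < +oo)%E.
Proof.
move=> pr; apply: le_lt_trans; apply: le_esum => x _.
by rewrite lee_fin; case/andP: (pr x).
Qed.

Lemma esumD_fin p r : (forall x, 0 <= p x) -> (forall x, 0 <= r x) ->
  (esumT (fun x => (p x)%:E) < +oo)%E -> (esumT (fun x => (r x)%:E) < +oo)%E ->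
  (esumT (fun x => (p x + r x)%:E) < +oo)%E.
Proof.
move=> p0 r0 pfin rfin; rewrite (eq_esum (b := fun x => (p x)%:E + (r x)%:E)%E) //.
by rewrite esumD ?lte_add_pinfty // => x _; rewrite lee_fin.
Qed.

Lemma esumMn_fin (m : nat) p : (forall x, 0 <= p x) ->
  (esumT (fun x => (p x)%:E) < +oo)%E -> (esumT (fun x => (p x *+ m)%:E) < +oo)%E.
Proof.
move=> p0 pfin; elim: m => [|m IH].
  by rewrite esum1 // => x _; rewrite mulr0n.
under eq_esum => x _ do rewrite mulrS.
by apply: esumD_fin => // x; rewrite mulrn_wge0.
Qed.

Lemma in_l2_0 : in_l2 (fun _ : multi I n => 0 : R).
Proof. by rewrite /in_l2 /sqnorm esum1 // => x _; rewrite expr0n. Qed.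

Lemma in_l2D u v : in_l2 u -> in_l2 v -> in_l2 (fun x => u x + v x).
Proof.
move=> ul vl; apply: (esum_fin_le (r := fun x => (u x ^+ 2 + v x ^+ 2) *+ 2)).
  move=> x; rewrite sqr_ge0 /=; have := sqr_ge0 (u x - v x).
  by rewrite !expr2 mulr2n; nra.
apply: esumMn_fin => [x|]; first by rewrite addr_ge0 ?sqr_ge0.
by apply: esumD_fin => // x; rewrite sqr_ge0.
Qed.

Lemma in_l2Z (a : R) u : in_l2 u -> in_l2 (fun x => a * u x).
Proof.
move=> ul; have a2 : 0 <= a ^+ 2 by rewrite sqr_ge0.
apply: (esum_fin_le (r := fun x => u x ^+ 2 *+ Num.Def.archi_bound (a ^+ 2))).
  move=> x; rewrite sqr_ge0 /= exprMn -mulr_natl ler_wpM2r ?sqr_ge0 //.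
  exact: ltW (archi_boundP a2).
by apply: esumMn_fin => // x; rewrite sqr_ge0.
Qed.

Lemma in_l2N u : in_l2 u -> in_l2 (fun x => - u x).
Proof. by rewrite /in_l2 /sqnorm => ul; under eq_esum => x _ do rewrite sqrrN. Qed.

Lemma in_l2_pact s u : in_l2 u -> in_l2 (pact s u).
Proof.
have bij : set_bij [set: multi I n] [set: multi I n] (mperm s).
  by rewrite setTT_bijective; exists (mperm s^-1); [apply: mpermK | apply: mpermKV].
by rewrite /in_l2 /sqnorm (reindex_esum _ _ _ (fun x => (u x ^+ 2)%:E) bij).
Qed.

Lemma in_l2_sum (J : Type) (rs : seq J) (Q : pred J) (F : J -> vec R I n) :
  (forall j, Q j -> in_l2 (F j)) -> in_l2 (fun x => \sum_(j <- rs | Q j) F j x).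
Proof. by move=> Fl; apply: sum_fun_ind => //; [exact: in_l2_0 | exact: in_l2D]. Qed.

Definition rsummable p := (esumT (fun x => `|p x|%:E) < +oo)%E.

Definition rsum p : R :=
  fine (esumT (fun x => (Num.max (p x) 0)%:E)) - fine (esumT (fun x => (Num.max (- p x) 0)%:E)).

Lemma innerE u v : inner u v = rsum (fun x => u x * v x).
Proof. by []. Qed.

Lemma rsummable0 : rsummable (fun _ => 0).
Proof. by rewrite /rsummable esum1 // => x _; rewrite normr0. Qed.

Lemma rsummableD p r : rsummable p -> rsummable r -> rsummable (fun x => p x + r x).
Proof.
move=> ps rs; apply: (esum_fin_le (r := fun x => `|p x| + `|r x|)).
  by move=> x; rewrite normr_ge0 ler_normD.
exact: esumD_fin.
Qed.

Lemma rsummable_sum (J : Type) (rs : seq J) (Q : pred J) (F : J -> multi I n -> R) :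
  (forall j, Q j -> rsummable (F j)) -> rsummable (fun x => \sum_(j <- rs | Q j) F j x).
Proof.
move=> Fs; apply: (sum_fun_ind (P := rsummable)) => //.
  exact: rsummable0.
exact: rsummableD.
Qed.

Lemma rsummable_l2 u v : in_l2 u -> in_l2 v -> rsummable (fun x => u x * v x).
Proof.
move=> ul vl; apply: (esum_fin_le (r := fun x => u x ^+ 2 + v x ^+ 2)); last first.
  by apply: esumD_fin => // x; rewrite sqr_ge0.
move=> x; rewrite normr_ge0 /=; have := sqr_ge0 (u x - v x); have := sqr_ge0 (u x + v x).
by rewrite !expr2; case: (lerP 0 (u x * v x)) => uv; [rewrite ger0_norm | rewrite ltr0_norm]; nra.
Qed.

Lemma esum_fin_num p r : (forall x, 0 <= r x <= `|p x|) -> rsummable p ->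
  esumT (fun x => (r x)%:E) \is a fin_num.
Proof.
move=> rp ps; rewrite ge0_fin_numE; last by apply: esum_ge0 => x _; case/andP: (rp x).
exact: esum_fin_le ps.
Qed.

Lemma rsumD p r : rsummable p -> rsummable r ->
  rsum (fun x => p x + r x) = rsum p + rsum r.
Proof.
move=> ps rs; have prs := rsummableD ps rs.
have posneg (a : R) : Num.max a 0 - Num.max (- a) 0 = a.
  case: (lerP a 0) => a0; first by rewrite max_l ?oppr_ge0 // sub0r opprK.
  by rewrite max_r ?subr0 // oppr_le0 ltW.
have pos_le (a : R) : 0 <= Num.max a 0 <= `|a| by rewrite le_max lexx orbT ge_max normr_ge0 ler_norm.
have neg_le (a : R) : 0 <= Num.max (- a) 0 <= `|a| by rewrite -normrN pos_le.
(* Regroup the positive and negative parts so that every esum has a nonnegative summand. *)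
have E : (esumT (fun x => (Num.max (p x + r x) 0)%:E) +
     (esumT (fun x => (Num.max (- p x) 0)%:E) + esumT (fun x => (Num.max (- r x) 0)%:E)) =
     esumT (fun x => (Num.max (- (p x + r x)) 0)%:E) +
     (esumT (fun x => (Num.max (p x) 0)%:E) + esumT (fun x => (Num.max (r x) 0)%:E)))%E.
  rewrite -!esumD; try by move=> x _; rewrite ?adde_ge0 // lee_fin le_max lexx orbT.
  apply: eq_esum => x _; rewrite -!EFinD; congr (_%:E).
  by have := posneg (p x + r x); have := posneg (p x); have := posneg (r x); lra.
have := congr1 fine E; rewrite !fineD ?fin_numD ?(esum_fin_num (fun x => neg_le _))
  ?(esum_fin_num (fun x => pos_le _)) //.
by rewrite /rsum; lra.
Qed.

Lemma rsum0 : rsum (fun _ => 0) = 0.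
Proof. by rewrite /rsum !esum1 ?subrr // => x _; rewrite ?oppr0 maxxx. Qed.

Lemma rsum_sum (J : Type) (rs : seq J) (Q : pred J) (F : J -> multi I n -> R) :
  (forall j, Q j -> rsummable (F j)) ->
  rsum (fun x => \sum_(j <- rs | Q j) F j x) = \sum_(j <- rs | Q j) rsum (F j).
Proof.
move=> Fs; elim: rs => [|j rs IH].
  by rewrite big_nil -[RHS]rsum0; congr (rsum _); apply: funext => x; rewrite big_nil.
rewrite big_cons; case Qj: (Q j).
  rewrite -IH -(rsumD (Fs j Qj) (rsummable_sum _ Fs)).
  by congr (rsum _); apply: funext => x; rewrite big_cons Qj.
by rewrite -IH; congr (rsum _); apply: funext => x; rewrite big_cons Qj.
Qed.

Lemma rsumMn p m : rsummable p -> rsum (fun x => p x *+ m) = rsum p *+ m.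
Proof.
move=> ps; rewrite -[in RHS](card_ord m) -sumr_const -rsum_sum //; congr (rsum _).
by apply: funext => x; rewrite sumr_const card_ord.
Qed.

Lemma rsum_mperm s p : rsum (fun x => p (mperm s x)) = rsum p.
Proof.
have bij : set_bij [set: multi I n] [set: multi I n] (mperm s).
  by rewrite setTT_bijective; exists (mperm s^-1); [apply: mpermK | apply: mpermKV].
rewrite /rsum (reindex_esum _ _ _ (fun x => (Num.max (p x) 0)%:E) bij).
by rewrite (reindex_esum _ _ _ (fun x => (Num.max (- p x) 0)%:E) bij).
Qed.

Lemma sqnorm_ge u y : ((u y ^+ 2)%:E <= sqnorm u)%E.
Proof.
rewrite /sqnorm; apply: esum_ge; exists [set y]%classic; first by split; [exact: finite_set1|].
by rewrite fsbig_set1.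
Qed.

Lemma normr_lt_sqnorm u (e : R) y : 0 < e -> (sqnorm u < (e ^+ 2)%:E)%E -> `|u y| < e.
Proof.
move=> e0 /(le_lt_trans (sqnorm_ge u y)); rewrite lte_fin !expr2 => uy.
by case: (lerP 0 (u y)) => u0; [rewrite ger0_norm | rewrite ltr0_norm]; nra.
Qed.

End SquareSummable.

(** * Linear spans and l^2-closures *)

Section SpanClosure.
Variables (R : realType) (I : countType) (n : nat).
Implicit Types (u g : vec R I n) (S : set (vec R I n)).

Lemma lspan0 S : lspan S (fun _ => 0).
Proof.
exists 0%N, (fun _ => 0), (fun _ _ => 0); split => [[] //|].
by apply: funext => x; rewrite big_ord0.
Qed.

Lemma lspanD S u g : lspan S u -> lspan S g -> lspan S (fun x => u x + g x).
Proof.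
move=> [m1 [c1 [g1 [Sg1 ->]]]] [m2 [c2 [g2 [Sg2 ->]]]].
exists (m1 + m2)%N,
  (fun i : 'I_(m1 + m2) => match fintype.split i with inl i1 => c1 i1 | inr i2 => c2 i2 end),
  (fun i : 'I_(m1 + m2) => match fintype.split i with inl i1 => g1 i1 | inr i2 => g2 i2 end).
split=> [i|]; first by case: (fintype.split i).
apply: funext => x; rewrite big_split_ord; congr (_ + _); apply: eq_bigr => i _.
  by rewrite (unsplitK (inl i)).
by rewrite (unsplitK (inr i)).
Qed.

Lemma lspanZ S (a : R) u : S u -> lspan S (fun x => a * u x).
Proof.
by exists 1%N, (fun _ => a), (fun _ => u); split => //; apply: funext => x; rewrite big_ord1.
Qed.

Lemma lspan_sum S (J : Type) (rs : seq J) (Q : pred J) (F : J -> vec R I n) (a : R) :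
  (forall j, Q j -> S (F j)) -> lspan S (fun x => \sum_(j <- rs | Q j) a * F j x).
Proof.
move=> SF; apply: (sum_fun_ind (P := lspan S)) => [|u g|j Qj]; first exact: lspan0.
  exact: lspanD.
exact/lspanZ/SF.
Qed.

Lemma l2closure_lspan S u : in_l2 u -> lspan S u -> l2closure (lspan S) u.
Proof.
move=> ul Su; split=> // e e0; exists u; split => //.
by rewrite /sqnorm esum1 ?lte_fin // => x _; rewrite subrr expr0n.
Qed.

Lemma eq0_norm_le_mul (r K : R) : 0 <= K -> (forall e, 0 < e -> `|r| <= K * e) -> r = 0.
Proof.
move=> K0 rK; apply/eqP; apply: contraT => r0; have ra : 0 < `|r| by rewrite normr_gt0.
have /rK : 0 < `|r| / (K + 1) by rewrite divr_gt0 ?ltr_wpDl.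
rewrite mulrA ler_pdivlMr ?ltr_wpDl //; nra.
Qed.

Section PointEvaluations.
Variables (J : finType) (P : pred J) (w : J -> R) (y : J -> multi I n).

Let eval u := \sum_(j | P j) w j * u (y j).

Lemma lspan_eval_eq0 S : (forall u, S u -> eval u = 0) -> forall u, lspan S u -> eval u = 0.
Proof.
move=> Seval u [m [c [g [Sg ->]]]]; rewrite /eval.
under eq_bigr => j _ do rewrite mulr_sumr.
rewrite exchange_big big1 // => i _.
by under eq_bigr => j _ do rewrite mulrCA; rewrite -mulr_sumr [X in _ * X](Seval _ (Sg i)) mulr0.
Qed.

(* A finite combination of point evaluations is continuous for the l^2 norm. *)
Lemma l2closure_eval_eq0 S : (forall u, S u -> eval u = 0) ->
  forall u, l2closure (lspan S) u -> eval u = 0.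
Proof.
move=> Seval u [_ uS]; apply: (@eq0_norm_le_mul _ (\sum_(j | P j) `|w j|)) => [|e e0].
  by rewrite sumr_ge0.
have [v [Sv uv]] := uS (e ^+ 2) (exprn_gt0 2 e0).
have -> : eval u = eval u - eval v by rewrite (lspan_eval_eq0 Seval Sv) subr0.
rewrite /eval -sumrB mulr_suml.
apply: le_trans (ler_norm_sum _ _ _) _; apply: ler_sum => j _.
by rewrite -mulrBr normrM ler_wpM2l // ltW // (normr_lt_sqnorm _ e0 uv).
Qed.

End PointEvaluations.

End SpanClosure.

(** * The two parts of an element of H_{k,q} *)

Lemma mixedE (R : realType) (I : countType) n (m p : nat) : (m + p)%N = n ->
  @mixed R I n m p = l2closure (lspan (@mixed_gens R I n m)).
Proof. by move=> mpn; rewrite /mixed; case: ifP; rewrite ?absz_nat // -mpn; lia. Qed.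

Lemma mixed_negl (R : realType) (I : countType) n (m p : int) : m < 0 ->
  @mixed R I n m p = [set fun _ => 0]%classic.
Proof. by move=> m0; rewrite /mixed; case: ifP => // /andP[/andP[]]; rewrite leNgt m0. Qed.

Lemma mixed_negr (R : realType) (I : countType) n (m p : int) : p < 0 ->
  @mixed R I n m p = [set fun _ => 0]%classic.
Proof. by move=> p0; rewrite /mixed; case: ifP => // /andP[/andP[_]]; rewrite leNgt p0. Qed.

Section MixedParts.
Variables (R : realType) (I : countType) (n : nat).
Implicit Types (f g h : vec R I n) (A : {set 'I_n}).

Lemma in_l2_sym_ext A j f : in_l2 f -> in_l2 (sym_ext A j f).
Proof. by move=> fl; apply: in_l2D => //; apply: in_l2_sum => c _; apply: in_l2_pact. Qed.

Lemma in_l2_sym_part A f : in_l2 f -> in_l2 (sym_part A f).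
Proof. by move=> fl; apply: in_l2_sum => j _; apply: in_l2_sym_ext. Qed.

Lemma in_l2_alt_ext D i f : in_l2 f -> in_l2 (alt_ext D i f).
Proof. by move=> fl; apply/in_l2D/in_l2N/in_l2_sum => // c _; apply: in_l2_pact. Qed.

Lemma in_l2_alt_part A f : in_l2 f -> in_l2 (alt_part A f).
Proof. by move=> fl; apply: in_l2_sum => i _; apply: in_l2_alt_ext. Qed.

Lemma in_l2_sym_over B f : in_l2 f -> in_l2 (sym_over B f).
Proof. by move=> fl; apply: in_l2_sum => s _; apply: in_l2_pact. Qed.

Lemma in_l2_alt_over B f : in_l2 f -> in_l2 (alt_over B f).
Proof. by move=> fl; apply: in_l2_sum => s _; apply/in_l2Z/in_l2_pact. Qed.

Lemma lspan_sym_part A f (a : R) : in_l2 f -> symm_on A f -> skew_on (~: A) f ->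
  lspan (mixed_gens #|A|.+1) (fun x => a * sym_part A f x).
Proof.
move=> fl fA fAc; set c := a / #|perm_on A|%:R.
have -> : (fun x => a * sym_part A f x) =
          (fun x => \sum_(j in ~: A) c * sym_over (j |: A) f x).
  apply: funext => x; rewrite mulr_sumr; apply: eq_bigr => j; rewrite inE => jA.
  by rewrite sym_over_setU1 // /c mulrA divfK ?card_perm_on_neq0.
apply: lspan_sum => j; rewrite inE => jA; split; first exact: in_l2_sym_over.
exists (j |: A); split; first by rewrite cardsU1 jA.
split; first exact: sym_over_symm.
apply/sym_over_skew; first by rewrite -setI_eq0 finset.setICr.
by apply: skew_onS fAc; rewrite finset.setCS subsetU1.
Qed.

Lemma lspan_alt_part A f (a : R) : in_l2 f -> symm_on A f -> skew_on (~: A) f ->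
  lspan (mixed_gens #|A|.-1) (fun x => a * alt_part A f x).
Proof.
move=> fl fA fAc; set c := a / #|perm_on (~: A)|%:R.
have -> : (fun x => a * alt_part A f x) =
          (fun x => \sum_(i in A) c * alt_over (i |: ~: A) f x).
  apply: funext => x; rewrite mulr_sumr; apply: eq_bigr => i iA.
  by rewrite alt_over_setU1 ?inE ?negbK // /c mulrA divfK ?card_perm_on_neq0.
apply: lspan_sum => i iA; split; first exact: in_l2_alt_over.
exists (A :\ i); split; first by rewrite (cardsD1 i A) iA.
have -> : i |: ~: A = ~: (A :\ i) by rewrite finset.setCD finset.setUC.
split; last exact: alt_over_skew.
apply: alt_over_symm; last by apply: symm_onS fA; rewrite subD1set.
by rewrite -setI_eq0 finset.setIC finset.setICr.
Qed.

Lemma alt_ext_eq0 A g i x : skew_on (~: A) g ->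
  l2closure (lspan (mixed_gens #|A|.+1)) g -> i \in A -> alt_ext (~: A) i g x = 0.
Proof.
move=> gAc gcl iA; have iAc : i \notin ~: A by rewrite inE negbK.
have : alt_over (i |: ~: A) g x = 0.
  apply: (l2closure_eval_eq0 (P := perm_on (i |: ~: A)) (w := @signp R n)
    (y := fun s => mperm s x) _ gcl) => u [_ [D [cD [uD _]]]].
  apply: alt_over_eq0 uD; apply: card_setI_gt1.
  by rewrite cardsU1 iAc cD; have := cardsC A; rewrite card_ord; lia.
rewrite alt_over_setU1 // => /eqP; rewrite mulf_eq0 (negbTE (card_perm_on_neq0 _ _)).
by move/eqP.
Qed.

Lemma sym_ext_eq0 A h j x m : (m.+1 = #|A|)%N ->
  symm_on A h -> l2closure (lspan (mixed_gens m)) h -> j \notin A -> sym_ext A j h x = 0.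
Proof.
move=> mA hA hcl jA.
have sym_overE u : sym_over (j |: A) u x = \sum_(s | perm_on (j |: A) s) 1 * u (mperm s x).
  by apply: eq_bigr => s _; rewrite mul1r.
have : sym_over (j |: A) h x = 0.
  rewrite sym_overE; apply: (l2closure_eval_eq0 _ hcl) => u [_ [D [cD [_ uDc]]]].
  rewrite -sym_overE; apply: sym_over_eq0 uDc; apply: card_setI_gt1.
  by rewrite cardsU1 jA -mA; have := cardsC D; rewrite card_ord cD; lia.
rewrite sym_over_setU1 // => /eqP; rewrite mulf_eq0 (negbTE (card_perm_on_neq0 _ _)).
by move/eqP.
Qed.

Lemma sym_ext_adjoint A j g h : in_l2 g -> in_l2 h ->
  rsum (fun x => sym_ext A j g x * h x) = rsum (fun x => g x * sym_ext A j h x).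
Proof.
move=> gl hl.
have gh c : rsummable (fun x => pact (tperm c j) g x * h x).
  by apply: rsummable_l2 => //; apply: in_l2_pact.
have hg c : rsummable (fun x => g x * pact (tperm c j) h x).
  by apply: rsummable_l2 => //; apply: in_l2_pact.
have -> : (fun x => sym_ext A j g x * h x) =
    (fun x => g x * h x + \sum_(c in A) pact (tperm c j) g x * h x).
  by apply: funext => x; rewrite /sym_ext mulrDl mulr_suml.
have -> : (fun x => g x * sym_ext A j h x) =
    (fun x => g x * h x + \sum_(c in A) g x * pact (tperm c j) h x).
  by apply: funext => x; rewrite /sym_ext mulrDr mulr_sumr.
rewrite !rsumD ?rsummable_l2 ?rsummable_sum // !rsum_sum //; congr (_ + _).
apply: eq_bigr => c _; rewrite -(rsum_mperm (tperm c j)); congr (rsum _).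
by apply: funext => x; rewrite !pactE mpermM tperm2 mperm1.
Qed.

Lemma inner_eq0 A g h : (0 < n)%N -> in_l2 g -> in_l2 h ->
  (forall i x, i \in A -> alt_ext (~: A) i g x = 0) ->
  (forall j x, j \notin A -> sym_ext A j h x = 0) -> inner g h = 0.
Proof.
move=> n0 gl hl galt hsym.
have sym_partE x : sym_part A g x = n%:R * g x.
  by rewrite -(sym_part_add_alt_part A) /alt_part big1 ?addr0 // => i iA; apply: galt.
suff : inner g h *+ n = 0 by move/eqP; rewrite mulrn_eq0 eqn0Ngt n0 => /eqP.
rewrite innerE -rsumMn ?rsummable_l2 //.
have -> : (fun x => g x * h x *+ n) = (fun x => \sum_(j in ~: A) sym_ext A j g x * h x).
  by apply: funext => x; rewrite -mulr_suml -/(sym_part A g x) sym_partE -mulrA mulr_natl.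
rewrite rsum_sum => [|j _]; last by apply: rsummable_l2 => //; apply: in_l2_sym_ext.
rewrite big1 // => j; rewrite inE => jA; rewrite sym_ext_adjoint // -[RHS](rsum0 R I n).
by congr (rsum _); apply: funext => x; rewrite hsym ?mulr0.
Qed.

Definition sym_proj A f : vec R I n := fun x => n%:R^-1 * sym_part A f x.

Definition alt_proj A f : vec R I n := fun x => n%:R^-1 * alt_part A f x.

Lemma sym_proj_add_alt_proj A f : (0 < n)%N ->
  f = (fun x => sym_proj A f x + alt_proj A f x).
Proof.
move=> n0; apply: funext => x.
by rewrite -mulrDr sym_part_add_alt_part mulKf // pnatr_eq0 -lt0n.
Qed.

End MixedParts.

Section Decomposition.
Variables (R : realType) (I : countType) (k q : nat).
Implicit Types (f g h : vec R I (k + q)).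

Local Notation A := [set i : 'I_(k + q) | (i < k)%N].

Lemma card_A : #|A| = k.
Proof.
have -> : A = [set lshift q i | i in 'I_k].
  apply/finset.setP => i; rewrite inE.
  apply/idP/imsetP => [ik|[j _ ->]]; last exact: (ltn_ord j).
  by exists (Ordinal ik) => //; apply: val_inj.
by rewrite card_imset ?card_ord //; apply: lshift_inj.
Qed.

Lemma HkqP f : Hkq f <-> [/\ in_l2 f, symm_on A f & skew_on (~: A) f].
Proof.
rewrite /Hkq /=; have -> : [set i : 'I_(k + q) | (k <= i)%N] = ~: A.
  by apply/finset.setP => i; rewrite !inE -leqNgt.
by split => [[? [? ?]]|[? ? ?]].
Qed.

Lemma setCA_eq0 : q = 0%N -> ~: A = finset.set0.
Proof. by move=> q0; apply: cards0_eq; have := cardsC A; rewrite card_A card_ord q0; lia. Qed.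

Lemma setA_eq0 : k = 0%N -> A = finset.set0.
Proof. by move=> k0; apply: cards0_eq; rewrite card_A. Qed.

Lemma mixed_up : mixed (k.+1)%:Z (q%:Z - 1) =
  if q == 0%N then [set fun _ => 0]%classic
  else l2closure (lspan (@mixed_gens R I (k + q) k.+1)).
Proof.
case: q => [|q']; first by rewrite mixed_negr.
by rewrite (_ : q'.+1%:Z - 1 = q') ?mixedE //; lia.
Qed.

Lemma mixed_down : mixed (k%:Z - 1) (q.+1)%:Z =
  if k == 0%N then [set fun _ => 0]%classic
  else l2closure (lspan (@mixed_gens R I (k + q) k.-1)).
Proof.
case: k => [|k']; first by rewrite mixed_negl.
by rewrite (_ : k'.+1%:Z - 1 = k') ?mixedE //; lia.
Qed.

Lemma HkqD g h : Hkq g -> Hkq h -> Hkq (fun x => g x + h x).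
Proof.
move=> /HkqP[gl gA gAc] /HkqP[hl hA hAc]; apply/HkqP.
by split; [exact: in_l2D | exact: symm_onD | exact: skew_onD].
Qed.

Lemma Hkq_sym_proj f : Hkq f -> Hkq (sym_proj A f).
Proof.
case/HkqP => fl fA fAc; apply/HkqP; split; first exact/in_l2Z/in_l2_sym_part.
  exact/symm_onZ/sym_part_symm.
exact/skew_onZ/sym_part_skew.
Qed.

Lemma Hkq_alt_proj f : Hkq f -> Hkq (alt_proj A f).
Proof.
case/HkqP => fl fA fAc; apply/HkqP; split.
- exact/in_l2Z/in_l2_alt_part.
- exact/symm_onZ/alt_part_symm.
- exact/skew_onZ/alt_part_skew.
Qed.

Lemma mixed_up_sym_proj f : Hkq f -> mixed (k.+1)%:Z (q%:Z - 1) (sym_proj A f).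
Proof.
case/HkqP => fl fA fAc; rewrite mixed_up; case: eqP => [q0|_].
  by apply: funext => x; rewrite /sym_proj /sym_part (setCA_eq0 q0) big_set0 mulr0.
apply: l2closure_lspan; first exact/in_l2Z/in_l2_sym_part.
by move: (lspan_sym_part (k + q)%:R^-1 fl fA fAc); rewrite card_A.
Qed.

Lemma mixed_down_alt_proj f : Hkq f -> mixed (k%:Z - 1) (q.+1)%:Z (alt_proj A f).
Proof.
case/HkqP => fl fA fAc; rewrite mixed_down; case: eqP => [k0|_].
  by apply: funext => x; rewrite /alt_proj /alt_part (setA_eq0 k0) big_set0 mulr0.
apply: l2closure_lspan; first exact/in_l2Z/in_l2_alt_part.
by move: (lspan_alt_part (k + q)%:R^-1 fl fA fAc); rewrite card_A.
Qed.

Lemma mixed_up_alt_ext_eq0 g : Hkq g -> mixed (k.+1)%:Z (q%:Z - 1) g ->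
  forall i x, i \in A -> alt_ext (~: A) i g x = 0.
Proof.
case/HkqP => _ _ gAc; rewrite mixed_up; case: eqP => [_ ->|_ gcl] i x iA.
  by rewrite /alt_ext big1 ?subrr.
by apply: alt_ext_eq0 => //; rewrite card_A.
Qed.

Lemma mixed_down_sym_ext_eq0 h : Hkq h -> mixed (k%:Z - 1) (q.+1)%:Z h ->
  forall j x, j \notin A -> sym_ext A j h x = 0.
Proof.
case/HkqP => _ hA _; rewrite mixed_down; case: eqP => [_ ->|/eqP k0 hcl] j x jA.
  by rewrite /sym_ext big1 ?addr0.
by rewrite (sym_ext_eq0 x _ hA hcl jA) // card_A prednK ?lt0n.
Qed.

End Decomposition.

Local Open Scope classical_set_scope.

Theorem lemma3p4 (R : realType) (I : countType) (k q : nat) (hn : (0 < k + q)%N) :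
  let Hp := @Hkq R I k q `&` @mixed R I (k + q) (k.+1)%:Z (q%:Z - 1) in
  let Hm := @Hkq R I k q `&` @mixed R I (k + q) (k%:Z - 1) (q.+1)%:Z in
  (forall g h, Hp g -> Hm h -> inner g h = 0) /\
  @Hkq R I k q = [set f | exists g h, Hp g /\ Hm h /\ f = (fun x => g x + h x)].
Proof.
move=> Hp Hm; split.
  move=> g h [Hg Mg] [Hh Mh].
  have [gl _ _] := (HkqP g).1 Hg; have [hl _ _] := (HkqP h).1 Hh.
  exact: inner_eq0 hn gl hl (mixed_up_alt_ext_eq0 Hg Mg) (mixed_down_sym_ext_eq0 Hh Mh).
apply/seteqP; split=> [f Hf|_ [g [h [[Hg _] [[Hh _] ->]]]]]; last exact: HkqD.
pose A := [set i : 'I_(k + q) | (i < k)%N]%SET; exists (sym_proj A f), (alt_proj A f).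
split; first by split; [exact: Hkq_sym_proj | exact: mixed_up_sym_proj].
split; first by split; [exact: Hkq_alt_proj | exact: mixed_down_alt_proj].
exact: sym_proj_add_alt_proj.
Qed.
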